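(* Let $d\ge2$, $\nu=e^{2\pi i/d}$, and $0<r\le1$. Let $p\in\mathcal P_d$, $p(z)=\sum_{j=0}^{d-1}c_jz^j$, and suppose there exists $z_0$ with $|z_0|=1$ such that $|\nu^jz_0-w|\ge r$ for every $j\in\{1,\dots,d\}$ and every root $w$ of every nonzero truncation of $p$. Then for all $j\in\{1,\dots,d\}$, $$|p(\nu^jz_0)|\ge\frac{r^{\frac{(d-1)d}{2}}\left(\frac{d-1}{2d}\right)^d\frac{2}{d-1}}{\prod_{k=0}^{d-1}(r^k+1)}\,\|\hat p\|_1,$$ where $\|\hat p\|_1=\sum_{j=0}^{d-1}|c_j|$.
   Context: $\mathcal P_d$ is the space of complex polynomials of degree at most $d-1$. For $p(z)=\sum_{j=0}^{d-1}c_jz^j$ and $n\in\{1,\dots,d\}$, the $n$-th truncation of $p$ is $p_n(z)=\sum_{j=0}^{n-1}c_jz^j$. *)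

From HB Require Import structures.
From mathcomp Require Import all_boot all_order all_algebra.
From mathcomp Require Import complex.
From mathcomp Require Import all_classical all_reals.
From mathcomp Require Import trigo.
Set Implicit Arguments. Unset Strict Implicit. Unset Printing Implicit Defensive.
Import Order.TTheory GRing.Theory Num.Theory.
Local Open Scope ring_scope.
Local Open Scope complex_scope.

Definition nu (R : realType) (d : nat) : R[i] :=
  cos (2 * pi / d%:R) +i* sin (2 * pi / d%:R).

Definition trunc_poly (R : realType) (n : nat) (p : {poly R[i]}) : {poly R[i]} :=
  \poly_(j < n) p`_j.

Definition l1coef (R : realType) (d : nat) (p : {poly R[i]}) : R :=
  \sum_(j < d) Normc.normc p`_j.

From HB Require Import structures.
From mathcomp Require Import all_boot all_order all_algebra.
From mathcomp Require Import complex.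
From mathcomp Require Import all_classical all_reals.
From mathcomp Require Import trigo.
From mathcomp Require Import ring lra.
Set Implicit Arguments. Unset Strict Implicit. Unset Printing Implicit Defensive.
Import Order.TTheory GRing.Theory Num.Theory.
Local Open Scope ring_scope.

(** Fix [z] on the unit circle and write [a_n = |p_n(z)|], [S_n = sum_{j<n} |c_j|].
    Factoring [p_{n+1}] over its roots, all at distance at least [r] from [z],
    gives [a_{n+1} >= |c_n| r^n]; the triangle inequality gives
    [a_{n+1} >= a_n - |c_n|].  Averaging the two bounds shows that a lower bound
    [a_n >= C S_n] propagates to [a_{n+1} >= C r^n / (2 (r^n + 1)) S_{n+1}], so
    [a_d = |p(z)|] is at least [4 prod_{k<d} r^k / (2 (r^k + 1))] times [S_d]
    (the [4] cancels the [k = 0] factor, starting from [a_1 = |c_0|]); this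
    constant dominates the one of the statement. *)

Section NormcFacts.
Variable R : realType.
Local Notation normc := (@Normc.normc R).

Lemma normc_ge0 (x : R[i]) : 0 <= normc x.
Proof. by case: x => a b; rewrite /Normc.normc sqrtr_ge0. Qed.

Lemma normc_prod (I : Type) (s : seq I) (F : I -> R[i]) :
  normc (\prod_(i <- s) F i) = \prod_(i <- s) normc (F i).
Proof. exact: (big_morph _ (@Normc.normcM R) (Normc.normc1 R)). Qed.

Lemma normcX (x : R[i]) n : normc (x ^+ n) = normc x ^+ n.
Proof.
by elim: n => [|n IH]; rewrite ?expr0 ?Normc.normc1 // !exprS Normc.normcM IH.
Qed.

Lemma normc_nu d : normc (nu R d) = 1.
Proof. by rewrite /nu /Normc.normc cos2Dsin2 sqrtr1. Qed.

Lemma lerB_normcD (u v : R[i]) : normc u - normc v <= normc (u + v).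
Proof.
by rewrite lerBlDr; have := le_normcD (u + v) (- v); rewrite addrK normcN.
Qed.

Lemma normc_horner_ge_lead_coef (q : {poly R[i]}) (z : R[i]) (r : R) :
  0 <= r -> q != 0 -> (forall w, root q w -> r <= normc (z - w)) ->
  normc (lead_coef q) * r ^+ (size q).-1 <= normc q.[z].
Proof.
move=> r_ge0 q_neq0 far; have [rs q_factor] := closed_field_poly_normal q.
have rs_roots w : w \in rs -> root q w.
  by rewrite q_factor rootZ ?lead_coef_eq0 // root_prod_XsubC.
have -> : (size q).-1 = size rs.
  by rewrite q_factor size_scale ?lead_coef_eq0 // size_prod_XsubC.
rewrite [in q.[z]]q_factor hornerZ horner_prod Normc.normcM normc_prod.
have -> : r ^+ size rs = \prod_(w <- rs) r.
  by rewrite big_const_seq count_predT; elim: (size rs) => //= n <-; rewrite exprS.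
rewrite ler_wpM2l ?normc_ge0 // big_seq_cond [leRHS]big_seq_cond.
rewrite ler_prod // => w /andP[w_rs _].
by rewrite r_ge0 hornerXsubC far ?rs_roots.
Qed.

End NormcFacts.

Section Truncation.
Variables (R : realType) (p : {poly R[i]}).

Lemma trunc_polyE n : trunc_poly n p = take_poly n p.
Proof. by []. Qed.

Lemma trunc_polyS n : trunc_poly n.+1 p = trunc_poly n p + p`_n *: 'X^n.
Proof. by rewrite /trunc_poly !poly_def big_ord_recr. Qed.

Lemma size_trunc_polyS n : p`_n != 0 -> size (trunc_poly n.+1 p) = n.+1.
Proof. exact: size_poly_eq. Qed.

Lemma lead_coef_trunc_polyS n : p`_n != 0 -> lead_coef (trunc_poly n.+1 p) = p`_n.
Proof. by move=> pn_neq0; rewrite lead_coef_poly // size_poly_eq. Qed.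

End Truncation.

Section LowerBoundConstant.
Variables (R : realFieldType) (r : R).
Hypothesis r_gt0 : 0 < r.

Definition trunc_lb_factor k := r ^+ k / (2 * (r ^+ k + 1)).

Definition trunc_lb_const n := 4 * \prod_(k < n) trunc_lb_factor k.

Lemma trunc_lb_factor_ge0 k : 0 <= trunc_lb_factor k.
Proof. by rewrite divr_ge0 ?mulr_ge0 ?addr_ge0 ?exprn_ge0 ?ltW. Qed.

Lemma trunc_lb_factor_le1 k : trunc_lb_factor k <= 1.
Proof.
have rk_ge0 := exprn_ge0 k (ltW r_gt0).
by rewrite ler_pdivrMr ?mulr_gt0 ?ltr_wpDl // mul1r; lra.
Qed.

Lemma trunc_lb_constS n : trunc_lb_const n.+1 = trunc_lb_const n * trunc_lb_factor n.
Proof. by rewrite /trunc_lb_const big_ord_recr mulrA. Qed.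

Lemma trunc_lb_const1 : trunc_lb_const 1 = 1.
Proof. by rewrite /trunc_lb_const big_ord1 /trunc_lb_factor expr0; field. Qed.

Lemma trunc_lb_const_ge0_le1 n : 0 <= trunc_lb_const n.+1 <= 1.
Proof.
elim: n => [|n /andP[c_ge0 c_le1]]; first by rewrite trunc_lb_const1 ler01 lexx.
rewrite trunc_lb_constS mulr_ge0 ?trunc_lb_factor_ge0 //=.
by rewrite -[1]mulr1 ler_pM ?trunc_lb_factor_ge0 ?trunc_lb_factor_le1.
Qed.

(* [(x + 1) a'] dominates both [x a >= c x s] and [a' >= x t >= c x t]. *)
Lemma ler_lower_bound_step (a a' s t x c : R) :
  0 < x -> 0 <= t -> 0 <= s -> 0 <= c <= 1 ->
  c * s <= a -> x * t <= a' -> a - t <= a' ->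
  c * (x / (2 * (x + 1))) * (s + t) <= a'.
Proof.
move=> x_gt0 t_ge0 s_ge0 /andP[c_ge0 c_le1] a_ge a'_ge_xt a'_ge_at.
have den_gt0 : 0 < 2 * (x + 1) by rewrite mulr_gt0 // ltr_wpDl // ltW.
rewrite -(ler_pM2r den_gt0).
have -> : c * (x / (2 * (x + 1))) * (s + t) * (2 * (x + 1)) = c * x * (s + t).
  by field; rewrite gt_eqF // addr_gt0.
have a'_ge0 : 0 <= a' by apply: le_trans a'_ge_xt; rewrite mulr_ge0 // ltW.
nra.
Qed.

End LowerBoundConstant.

Section UnitCircle.
Variables (R : realType) (r : R) (p : {poly R[i]}) (z : R[i]).
Local Notation normc := (@Normc.normc R).
Hypotheses (r_gt0 : 0 < r) (z_unit : normc z = 1).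
Hypothesis roots_far : forall n, trunc_poly n p != 0 ->
  forall w, root (trunc_poly n p) w -> r <= normc (z - w).

Lemma horner_trunc_polyS_ge_coef n :
  normc p`_n * r ^+ n <= normc (trunc_poly n.+1 p).[z].
Proof.
have [->|pn_neq0] := eqVneq p`_n 0; first by rewrite Normc.normc0 mul0r normc_ge0.
have trunc_neq0 : trunc_poly n.+1 p != 0.
  by rewrite -size_poly_eq0 size_trunc_polyS.
have := normc_horner_ge_lead_coef (ltW r_gt0) trunc_neq0 (roots_far trunc_neq0).
by rewrite lead_coef_trunc_polyS // size_trunc_polyS.
Qed.

Lemma horner_trunc_polyS_ge_prev n :
  normc (trunc_poly n p).[z] - normc p`_n <= normc (trunc_poly n.+1 p).[z].
Proof.
rewrite trunc_polyS hornerD hornerZ hornerXn.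
have := lerB_normcD (trunc_poly n p).[z] (p`_n * z ^+ n).
by rewrite Normc.normcM normcX z_unit expr1n mulr1.
Qed.

Lemma horner_trunc_poly_ge n :
  trunc_lb_const r n.+1 * \sum_(j < n.+1) normc p`_j
    <= normc (trunc_poly n.+1 p).[z].
Proof.
elim: n => [|n IH].
  by rewrite trunc_lb_const1 mul1r big_ord1 -[leLHS]mulr1 -(expr0 r)
    horner_trunc_polyS_ge_coef.
rewrite trunc_lb_constS big_ord_recr /= /trunc_lb_factor.
apply: (ler_lower_bound_step _ _ _ (trunc_lb_const_ge0_le1 r_gt0 n) IH).
- by rewrite exprn_gt0.
- exact: normc_ge0.
- by rewrite sumr_ge0 // => i _; apply: normc_ge0.
- by rewrite mulrC horner_trunc_polyS_ge_coef.
- exact: horner_trunc_polyS_ge_prev.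
Qed.

End UnitCircle.

Lemma stated_const_le_trunc_lb_const (R : realFieldType) (d : nat) (r : R) :
  (2 <= d)%N -> 0 < r ->
  (r ^+ ((d - 1) * d %/ 2) * ((d%:R - 1) / (2 * d%:R)) ^+ d * (2 / (d%:R - 1)))
      / (\prod_(k < d) (r ^+ k + 1))
  <= trunc_lb_const r d.
Proof.
move=> d_ge2 r_gt0.
have prod_rk : \prod_(k < d) r ^+ k = r ^+ ((d - 1) * d %/ 2).
  rewrite prodrXr -(big_mkord xpredT (fun k => k)) bin2_sum bin2 divn2.
  by rewrite subn1 mulnC.
rewrite /trunc_lb_const /trunc_lb_factor prodf_div prod_rk big_split /=.
rewrite prodr_const card_ord.
set E := r ^+ _; set P := \prod_(k < d) _; set X := _ / (2 * d%:R).
set Y := 2 / (d%:R - 1).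
have E_ge0 : 0 <= E by rewrite exprn_ge0 // ltW.
have P_gt0 : 0 < P by rewrite prodr_gt0 // => k _; rewrite ltr_wpDl ?exprn_ge0 ?ltW.
have d1_ge1 : (1 : R) <= d%:R - 1 by rewrite lerBrDr -(natrD _ 1 1) ler_nat.
have X_ge0 : 0 <= X by rewrite divr_ge0 ?mulr_ge0 ?ler0n //; lra.
have d_gt0 : (0 : R) < d%:R by rewrite ltr0n (leq_trans _ d_ge2).
have X_le_half : X <= 2^-1 by rewrite ler_pdivrMr ?mulr_gt0 //; lra.
have Y_ge0 : 0 <= Y by apply: divr_ge0; lra.
have Y_le2 : Y <= 2 by rewrite ler_pdivrMr; nra.
have XdY_le : X ^+ d * Y <= 4 * 2^-1 ^+ d.
  have Xd_le : X ^+ d <= 2^-1 ^+ d by rewrite lerXn2r // nnegrE // invr_ge0; lra.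
  have := exprn_ge0 d X_ge0; nra.
have -> : E * X ^+ d * Y / P = E / P * (X ^+ d * Y) by ring.
have -> : 4 * (E / (2 ^+ d * P)) = E / P * (4 * 2^-1 ^+ d).
  by rewrite exprVn invfM; ring.
by rewrite ler_wpM2l // divr_ge0 // ltW.
Qed.

Theorem mainTheorem8 (R : realType) (d : nat) (r : R) (p : {poly R[i]}) (z0 : R[i]) :
  (2 <= d)%N -> 0 < r -> r <= 1 ->
  (size p <= d)%N ->
  Normc.normc z0 = 1 ->
  (forall (j n : nat) (w : R[i]), (1 <= j <= d)%N -> (1 <= n <= d)%N ->
     trunc_poly n p != 0 -> root (trunc_poly n p) w ->
     r <= Normc.normc (nu R d ^+ j * z0 - w)) ->
  forall j : nat, (1 <= j <= d)%N ->
    (r ^+ ((d - 1) * d %/ 2) * ((d%:R - 1) / (2 * d%:R)) ^+ d * (2 / (d%:R - 1)))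
      / (\prod_(k < d) (r ^+ k + 1)) * l1coef d p
    <= Normc.normc (p.[nu R d ^+ j * z0]).
Proof.
move=> d_ge2 r_gt0 r_le1 size_p z0_unit roots_far j j_range.
set z := nu R d ^+ j * z0.
have z_unit : Normc.normc z = 1.
  by rewrite Normc.normcM normcX normc_nu expr1n mul1r.
have roots_far_all n : trunc_poly n p != 0 ->
    forall w, root (trunc_poly n p) w -> r <= Normc.normc (z - w).
  case: n => [|n]; first by rewrite trunc_polyE take_poly0l eqxx.
  have [n_le_d|d_lt_n] := leqP n.+1 d.
    by move=> trunc_neq0 w; apply: roots_far; rewrite ?n_le_d.
  rewrite trunc_polyE take_poly_id ?(leq_trans size_p (ltnW d_lt_n)) //.
  rewrite -{1 2}(take_poly_id size_p) -!trunc_polyE => trunc_neq0 w.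
  by apply: roots_far => //; rewrite leqnn (leq_trans _ d_ge2).
have := horner_trunc_poly_ge r_gt0 z_unit roots_far_all d.-1.
rewrite prednK ?(ltnW d_ge2) // trunc_polyE take_poly_id //; apply: le_trans.
rewrite ler_wpM2r ?stated_const_le_trunc_lb_const //.
by rewrite sumr_ge0 // => i _; apply: normc_ge0.
Qed.
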